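(* Let $q=(q_1,\ldots,q_n)$ be a sequence of positive integers, set $Q:=1+q_1+\cdots+q_n$, and define \[ T_q:=\{\,b\in\{1,\ldots,Q-1\} \;:\; Q\nmid q_i b \text{ for all } i\in\{1,\ldots,n\}\,\}. \] Then the local $h^\ast$-polynomial of the $n$-simplex $\Delta_{(1,q)}$ is \[ \ell^\ast(\Delta_{(1,q)};z)=\sum_{b\in T_q} z^{\omega(b)},\qquad \text{where}\quad \omega(b)=b-\sum_{i=1}^n\left\lfloor \frac{q_i b}{Q}\right\rfloor . \]
   Context: Let $e^{(1)},\ldots,e^{(n)}$ be the standard basis of $\mathbb{R}^n$. For a vector $q=(q_1,\ldots,q_n)$ of positive integers, $\Delta_{(1,q)}:=\operatorname{conv}\bigl(e^{(1)},\ldots,e^{(n)},-\sum_{i=1}^n q_ie^{(i)}\bigr)\subset\mathbb{R}^n$; it is a lattice $n$-simplex. For a lattice $d$-simplex $\Delta=\operatorname{conv}(v^{(0)},\ldots,v^{(d)})\subset\mathbb{R}^n$, its open parallelepiped is $\Pi^\circ_\Delta:=\{\sum_{i=0}^d\lambda_i(v^{(i)},1)\in\mathbb{R}^{n+1} : 0<\lambda_i<1 \text{ for all } i\}$, and its local $h^\ast$-polynomial (box polynomial) is $\ell^\ast(\Delta;z):=\sum_{x=(x_1,\ldots,x_{n+1})\in\Pi^\circ_\Delta\cap\mathbb{Z}^{n+1}} z^{x_{n+1}}$. *)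

From HB Require Import structures.
From mathcomp Require Import all_boot all_order all_algebra.
Set Implicit Arguments. Unset Strict Implicit. Unset Printing Implicit Defensive.
Import Order.TTheory GRing.Theory Num.Theory.
Local Open Scope ring_scope.

(* q = (q_1,...,q_n) is represented as a list q of length n; q_i = nth 0 q (i-1)
   (0-based indices below).  Vertices of Delta_(1,q), indexed j = 0..n:
   v^(j) = e^(j) for j < n, and v^(n) = - sum_i q_i e^(i).
   liftv q j i is the i-th coordinate (i = 0..n) of the lifted vertex (v^(j),1). *)
Definition liftv (q : seq nat) (j i : nat) : int :=
  if i == size q then 1
  else if j == size q then - ((nth 0%N q i)%:Z)
  else ((i == j) : nat)%:Z.

Definition in_open_par (R : realFieldType) (q : seq nat)
  (x : 'rV[int]_(size q).+1) : Prop :=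
  exists lam : 'I_(size q).+1 -> R,
    (forall j, 0 < lam j < 1) /\
    (forall i : 'I_(size q).+1,
        (x ord0 i)%:~R = \sum_(j < (size q).+1) lam j * (liftv q j i)%:~R).

Definition bigQ (q : seq nat) : nat := (1 + sumn q)%N.

Definition Tq (q : seq nat) : seq nat :=
  [seq b <- iota 1 (bigQ q).-1 | all (fun a => ~~ (bigQ q %| a * b)%N) q].

Definition omega (q : seq nat) (b : nat) : int :=
  b%:Z - (\sum_(i < size q) ((nth 0%N q i * b) %/ bigQ q)%N%:Z).

Arguments in_open_par R q x : clear implicits.

From HB Require Import structures.
From mathcomp Require Import all_boot all_order all_algebra.
From mathcomp Require Import zify ring.
Import Order.TTheory GRing.Theory Num.Theory.
Local Open Scope ring_scope.

(* A lattice point x = sum_j lam_j (v^(j), 1) of the open parallelepiped determines the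
   integer b := x_n - sum_(i < n) x_i = Q lam_n, which lies strictly between 0 and Q.
   Then Q x_i + q_i b = Q lam_i also lies strictly between 0 and Q, which forces
   x_i = - floor(q_i b / Q) and Q not dividing q_i b; so x is determined by b, b lies in T_q
   and the height of x is omega(b).  Conversely every b in T_q arises, with
   lam_n = b / Q and lam_i = (q_i b mod Q) / Q. *)

Lemma divn_of_open_residue (Q a : nat) (x : int) :
  0 < Q%:Z * x + a%:Z < Q%:Z -> x = - (a %/ Q)%N%:Z /\ ~~ (Q %| a)%N.
Proof.
move=> /andP[res_gt0 res_ltQ]; have Q_gt0 : (0 < Q)%N by lia.
have r_ltQ := ltn_pmod a Q_gt0.
rewrite (divn_eq a Q) in res_gt0 res_ltQ; rewrite /dvdn.
have quot_eq : x + (a %/ Q)%N%:Z = 0 by nia.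
split; lia.
Qed.

Lemma int_open_scaled {R : realFieldType} {N : nat} {m : int} {t : R} :
  (0 < N)%N -> m%:~R = N%:R * t -> 0 < t < 1 -> 0 < m < N%:Z.
Proof.
move=> N_gt0 m_eq /andP[t_gt0 t_lt1].
rewrite -(ltr0z R) -(ltr_int R) m_eq mulr_gt0 ?ltr0n //=.
by rewrite -[X in _ < X]mulr1 ltr_pM2l ?ltr0n.
Qed.

Lemma open_unit_frac {R : realFieldType} (N a : nat) :
  (0 < a < N)%N -> 0 < (a%:R / N%:R : R) < 1.
Proof.
move=> /andP[a_gt0 a_ltN]; have N_gt0 : (0 < N)%N by apply: leq_ltn_trans a_ltN.
by rewrite divr_gt0 ?ltr0n //= ltr_pdivrMr ?ltr0n // mul1r ltr_nat.
Qed.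

Lemma sumn_nth (s : seq nat) : sumn s = (\sum_(i < size s) nth 0%N s i)%N.
Proof. by rewrite sumnE (big_nth 0%N) big_mkord. Qed.

Section OpenParallelepiped.

Variable q : seq nat.
Local Notation n := (size q).
Local Notation Q := (bigQ q).
Local Notation widen := (widen_ord (leqnSn n)).

Definition floor_coord (i b : nat) : nat := ((nth 0%N q i * b) %/ Q)%N.

Definition box_point (b : nat) : 'rV[int]_n.+1 :=
  \row_(i < n.+1) if i == n :> nat then omega q b else - (floor_coord i b)%:Z.

Definition box_index (x : 'rV[int]_n.+1) : int :=
  x ord0 ord_max - \sum_(i < n) x ord0 (widen i).

Lemma box_indexK : cancel box_point (fun x => `|box_index x|%N).
Proof.
move=> b; rewrite /box_index mxE /= eqxx.
under eq_bigr do rewrite mxE /= (ltn_eqF (ltn_ord _)).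
by rewrite sumrN opprK /omega subrK.
Qed.

Lemma box_point_inj : injective box_point.
Proof. exact: can_inj box_indexK. Qed.

Lemma mem_Tq (b : nat) :
  (b \in Tq q) = (0 < b < Q)%N && all (fun a => ~~ (Q %| a * b)%N) q.
Proof. by rewrite mem_filter mem_iota andbC /bigQ add1n. Qed.

Lemma omega_mulQ (b : nat) :
  Q%:Z * omega q b = b%:Z + \sum_(i < n) ((nth 0%N q i * b) %% Q)%N%:Z.
Proof.
have mod_eq (i : 'I_n) : ((nth 0%N q i * b) %% Q)%N%:Z
    = (nth 0%N q i)%:Z * b%:Z - Q%:Z * (floor_coord i b)%:Z.
  by have := divn_eq (nth 0%N q i * b) Q; rewrite /floor_coord; nia.
have sum_q : \sum_(i < n) (nth 0%N q i)%:Z = Q%:Z - 1.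
  rewrite /bigQ (sumn_nth q) PoszD -[(\sum_(i < n) _)%N%:Z]natz natr_sum addrAC subrr add0r.
  by under eq_bigr do rewrite natz.
rewrite (eq_bigr _ (fun i _ => mod_eq i)) sumrB -mulr_sumr -mulr_suml sum_q /omega.
ring.
Qed.

Variable R : realFieldType.

Lemma sum_liftv (lam : 'I_n.+1 -> R) (i : 'I_n.+1) :
  \sum_j lam j * (liftv q j i)%:~R =
  if i == n :> nat then \sum_j lam j else lam i - (nth 0%N q i)%:R * lam ord_max.
Proof.
rewrite /liftv; case: eqP => [_|i_neq]; first by under eq_bigr do rewrite mulr1.
have i_lt : (i < n)%N by rewrite ltn_neqAle leq_ord andbT; apply/eqP.
rewrite big_ord_recr /= eqxx (bigD1 (Ordinal i_lt)) //= (ltn_eqF i_lt) eqxx mulr1.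
rewrite big1 ?addr0 => [|j j_neq]; last first.
  by rewrite (ltn_eqF (ltn_ord j)) eq_sym (negbTE (j_neq : val j != i)) mulr0.
by rewrite (_ : widen (Ordinal i_lt) = i) ?intrN ?mulrN ?(mulrC (lam _)) //; apply: val_inj.
Qed.

Lemma box_point_open_par (b : nat) : b \in Tq q -> in_open_par R q (box_point b).
Proof.
rewrite mem_Tq => /andP[b_range /allP not_dvd].
have Q_neq0 : (Q%:R : R) != 0 by rewrite pnatr_eq0.
pose res (j : 'I_n.+1) := if j == n :> nat then b else ((nth 0%N q j * b) %% Q)%N.
have res_widen (j : 'I_n) : res (widen j) = ((nth 0%N q j * b) %% Q)%N.
  by rewrite /res /= (ltn_eqF (ltn_ord j)).
exists (fun j => (res j)%:R / Q%:R); split => [j|i].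
  apply: open_unit_frac; rewrite /res; case: eqP => // j_neq.
  have j_lt : (j < n)%N by rewrite ltn_neqAle leq_ord andbT; apply/eqP.
  by rewrite ltn_pmod // lt0n andbT; exact: (not_dvd _ (mem_nth 0%N j_lt)).
rewrite (sum_liftv (fun j => (res j)%:R / Q%:R)) mxE; case: eqP => i_eq.
  rewrite -mulr_suml big_ord_recr /=.
  under eq_bigr do rewrite res_widen.
  apply: (mulIf Q_neq0); rewrite divfK // mulrC /res eqxx.
  rewrite (_ : Q%:R = (Q%:Z)%:~R :> R) // -intrM omega_mulQ.
  by rewrite addrC intrD rmorph_sum.
rewrite /res eqxx (negbTE (introN eqP i_eq)) /= /floor_coord mulrA -natrM intrN.
set a := (nth 0%N q i * b)%N.
rewrite [in X in _ = _ - X / _](divn_eq a Q) natrD natrM.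
rewrite (_ : ((a %/ Q)%N%:Z)%:~R = (a %/ Q)%:R :> R) //.
by field.
Qed.

Lemma open_par_box_point (x : 'rV[int]_n.+1) :
  in_open_par R q x -> exists2 b, b \in Tq q & x = box_point b.
Proof.
case=> lam [lam_range x_eq]; have Q_gt0 : (0 < Q)%N by [].
have x_widen (i : 'I_n) :
    (x ord0 (widen i))%:~R = lam (widen i) - (nth 0%N q i)%:R * lam ord_max.
  by rewrite x_eq sum_liftv /= (ltn_eqF (ltn_ord i)).
have index_eq : (box_index x)%:~R = Q%:R * lam ord_max.
  rewrite intrB rmorph_sum (eq_bigr _ (fun i _ => x_widen i)) x_eq sum_liftv /= eqxx.
  rewrite big_ord_recr sumrB -mulr_suml -natr_sum /bigQ natrD -(sumn_nth q) /=; ring.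
have /andP[index_gt0 index_ltQ] := int_open_scaled Q_gt0 index_eq (lam_range ord_max).
pose b := `|box_index x|%N.
have b_eq : box_index x = b%:Z by rewrite gtz0_abs.
have coord_eq (i : 'I_n) :
    x ord0 (widen i) = - (floor_coord i b)%:Z /\ ~~ (Q %| nth 0%N q i * b)%N.
  apply: divn_of_open_residue; apply: (int_open_scaled Q_gt0 _ (lam_range (widen i))).
  have b_R : (b%:R : R) = Q%:R * lam ord_max by rewrite -index_eq b_eq.
  by rewrite intrD intrM x_widen -!pmulrn natrM b_R; ring.
exists b.
  rewrite mem_Tq -ltz_nat -b_eq index_gt0 -(ltz_nat b) -b_eq index_ltQ /=.
  by apply/allP => a /(nthP 0%N) [j j_lt <-]; exact: (coord_eq (Ordinal j_lt)).2.
apply/rowP => i; rewrite mxE; case: eqP => i_eq.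
  move: b_eq; rewrite (_ : i = ord_max); last exact: val_inj.
  rewrite /box_index (eq_bigr _ (fun j _ => (coord_eq j).1)) sumrN opprK /omega => <-.
  by rewrite addrK.
have i_lt : (i < n)%N by rewrite ltn_neqAle leq_ord andbT; apply/eqP.
by rewrite (_ : i = widen (Ordinal i_lt)); [exact: (coord_eq _).1 | apply: val_inj].
Qed.

End OpenParallelepiped.

Theorem theorem2p1 (R : realFieldType) (q : seq nat)
  (hq : all (fun a => (0 < a)%N) q) :
  exists s : seq 'rV[int]_(size q).+1,
    [/\ uniq s,
        (forall x, x \in s <-> in_open_par R q x) &
        (forall z : R, z != 0 ->
           \sum_(x <- s) z ^ (x ord0 ord_max) = \sum_(b <- Tq q) z ^ omega q b)].
Proof.
exists (map (box_point q) (Tq q)); split.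
- by rewrite (map_inj_uniq (@box_point_inj q)) filter_uniq // iota_uniq.
- move=> x; split => [/mapP[b b_Tq ->]|]; first exact: box_point_open_par.
  by case/open_par_box_point => b b_Tq ->; apply: map_f.
- by move=> z _; rewrite big_map; apply: eq_bigr => b _; rewrite mxE eqxx.
Qed.
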